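(* Let $a<b$, let $\mu$ be a Steffensen–Popoviciu measure on $[a,b]$ with barycenter $b_\mu=\frac{1}{\mu([a,b])}\int_a^b x\,d\mu(x)$, and let $f:[a,b]\to\mathbb{R}$ be a left almost convex function, with $c<d$ interior points of $[a,b]$ as in the definition of left almost convexity (so $f|_{[c,b]}$ is convex and $f\ge h$ on $[a,c]$, where $h$ is the affine function with $h(c)=f(c)$, $h(d)=f(d)$). Suppose that (i) $b_\mu\ge c$; and (ii) $\displaystyle\int_a^d\Big(\big(f(x)-f(c)\big)(d-c)-\big(f(d)-f(c)\big)(x-c)\Big)\,d\mu(x)\ge0.$ Then \[ f(b_\mu)\le\frac{1}{\mu([a,b])}\int_a^b f(x)\,d\mu(x). \]
   Context: A Steffensen–Popoviciu measure on a compact interval $[a,b]$ is a real (signed, finite) Borel measure $\mu$ on $[a,b]$ with $\mu([a,b])>0$ such that $\int_{[a,b]} g(x)\,d\mu(x)\ge0$ for every continuous convex function $g:[a,b]\to[0,\infty)$. Its barycenter is $b_\mu=\frac{1}{\mu([a,b])}\int_a^b x\,d\mu(x)$. A real-valued function $f$ defined on an interval $I$ is called left almost convex if it is integrable and there is a pair of interior points $c<d$ of $I$ such that: (i) $f|_{[c,\infty)\cap I}$ is convex; and (ii) $f\ge h$ on $(-\infty,c]\cap I$, where $h$ is the affine function joining the points $(c,f(c))$ and $(d,f(d))$. Here ''integrable'' is understood as integrable with respect to the total variation $|\mu|$ of the measure under consideration, so that all integrals in the statement exist. *)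

From HB Require Import structures.
From mathcomp Require Import all_boot all_order all_algebra.
From mathcomp Require Import all_classical all_reals all_analysis.
Set Implicit Arguments.
Unset Strict Implicit.
Unset Printing Implicit Defensive.
Import Order.TTheory GRing.Theory Num.Theory numFieldNormedType.Exports.
Local Open Scope classical_set_scope.
Local Open Scope ring_scope.

Notation BorelR R := (measurableTypeR R).

(* A finite signed Borel measure on [a,b], represented by its Jordan
   decomposition mu = mup - mun: two finite Borel measures on R, both
   concentrated on [a,b], mutually singular. *)
Definition signed_measure_on (R : realType) (a b : R)
    (mup mun : {finite_measure set BorelR R -> \bar R}) : Prop :=
  [/\ mup (~` `[a, b]%classic) = 0%E, mun (~` `[a, b]%classic) = 0%E &
      exists P : set (BorelR R), [/\ measurable P, mup (~` P) = 0%E & mun P = 0%E]].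

Definition sp_mass (R : realType) (mup mun : {finite_measure set BorelR R -> \bar R})
    (D : set R) : R := fine (mup D) - fine (mun D).

Definition sp_integral (R : realType) (mup mun : {finite_measure set BorelR R -> \bar R})
    (D : set R) (f : R -> R) : R :=
  Rintegral mup D f - Rintegral mun D f.

(* integrability with respect to the total variation |mu| = mup + mun *)
Definition sp_integrable (R : realType) (mup mun : {finite_measure set BorelR R -> \bar R})
    (D : set R) (f : R -> R) : Prop :=
  mup.-integrable D (EFin \o f) /\ mun.-integrable D (EFin \o f).

Definition sp_convex_on (R : realType) (D : set R) (f : R -> R) : Prop :=
  forall x y t : R, D x -> D y -> 0 <= t <= 1 ->
    f (t * x + (1 - t) * y) <= t * f x + (1 - t) * f y.

Definition SP_measure (R : realType) (a b : R)
    (mup mun : {finite_measure set BorelR R -> \bar R}) : Prop :=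
  [/\ signed_measure_on a b mup mun,
      0 < sp_mass mup mun `[a, b]%classic &
      forall g : R -> R, {within `[a, b]%classic, continuous g} ->
        sp_convex_on `[a, b]%classic g -> (forall x, `[a, b]%classic x -> 0 <= g x) ->
        0 <= sp_integral mup mun `[a, b]%classic g].

Definition sp_barycenter (R : realType) (a b : R)
    (mup mun : {finite_measure set BorelR R -> \bar R}) : R :=
  sp_integral mup mun `[a, b]%classic id / sp_mass mup mun `[a, b]%classic.

Definition sp_chord (R : realType) (f : R -> R) (c d : R) (x : R) : R :=
  f c + (f d - f c) / (d - c) * (x - c).

Definition left_almost_convex_with (R : realType) (a b : R)
    (mup mun : {finite_measure set BorelR R -> \bar R}) (f : R -> R) (c d : R) : Prop :=
  [/\ sp_integrable mup mun `[a, b]%classic f,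
      a < c /\ c < d /\ d < b,
      sp_convex_on `[c, b]%classic f &
      forall x, `[a, c]%classic x -> sp_chord f c d x <= f x].

(* Fix t in [d, b) and let G agree with the chord of f through c and d on
   (-oo, d], with f on [d, t], and with the chord of f through t and b on
   [t, +oo).  Convexity of f on [c, b] makes G convex, hence continuous, so the
   Steffensen-Popoviciu property applied to G minus a supporting line at the
   barycenter gives Jensen's inequality G(b_mu) mu([a, b]) <= int G dmu; and
   f(b_mu) <= G(b_mu) because b_mu lies in [c, b].  The difference f - G vanishes
   on ]d, t] and at b, its integral over [a, d] is hypothesis (ii) divided by
   d - c, and on ]t, b[ it lies in [-2M, 0] for a bound M of |f| on [d, b].
   Hence int f dmu >= int G dmu - 2M mu+(]t, b[), and mu+(]t, b[) -> 0 as t -> b.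
   The cut at t is needed because f may jump at b whereas G must be continuous. *)

From HB Require Import structures.
From mathcomp Require Import all_boot all_order all_algebra.
From mathcomp Require Import all_classical all_reals all_analysis.
From mathcomp Require Import measurable_realfun ring lra.
Import Order.TTheory GRing.Theory Num.Theory numFieldNormedType.Exports.
Local Open Scope classical_set_scope.
Local Open Scope ring_scope.

Set Implicit Arguments.
Unset Strict Implicit.
Unset Printing Implicit Defensive.

Section ChordConvex.
Variable R : realType.
Implicit Types (p q x y z u v c d s : R) (g f : R -> R).

Definition chord_convex p q g : Prop :=
  forall x y z, p <= x -> x < y -> y < z -> z <= q ->
    (z - x) * g y <= (z - y) * g x + (y - x) * g z.

Definition slope g u v : R := (g v - g u) / (v - u).

Lemma chord_convex_le p q g : chord_convex p q g ->
  forall x y z, p <= x -> x <= y -> y <= z -> z <= q ->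
    (z - x) * g y <= (z - y) * g x + (y - x) * g z.
Proof.
move=> cvx x y z px xy yz zq.
have [<-|xy'] := eqVneq x y; first by rewrite subrr mul0r addr0.
have [<-|yz'] := eqVneq y z; first by rewrite subrr mul0r add0r.
by apply: cvx; rewrite // lt_neqAle ?xy' ?yz'.
Qed.

Lemma chord_convexW p q p' q' g :
  p <= p' -> q' <= q -> chord_convex p q g -> chord_convex p' q' g.
Proof. by move=> pp' q'q cvx x y z px xy yz zq; apply: cvx => //; lra. Qed.

Lemma chord_convex_affine p q al s x0 :
  chord_convex p q (fun x => al + s * (x - x0)).
Proof. by move=> x y z _ _ _ _; lra. Qed.

Lemma chord_convexB_affine p q al s x0 g : chord_convex p q g ->
  chord_convex p q (fun x => g x - (al + s * (x - x0))).
Proof.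
move=> cvx x y z px xy yz zq; have := cvx x y z px xy yz zq.
have := @chord_convex_affine p q al s x0 x y z px xy yz zq; lra.
Qed.

Lemma slopeC g u v : slope g u v = slope g v u.
Proof. by rewrite /slope -opprB -(opprB u) invrN mulrNN. Qed.

Lemma slopeK g u v : u != v -> slope g u v * (v - u) = g v - g u.
Proof. by move=> uv; rewrite /slope divfK // subr_eq0 eq_sym. Qed.

Lemma slope_le3 p q g : chord_convex p q g ->
  forall x y z, p <= x -> x < y -> y < z -> z <= q ->
  slope g x y <= slope g x z /\ slope g x z <= slope g y z.
Proof.
move=> cvx x y z px xy yz zq; have := cvx x y z px xy yz zq.
rewrite /slope; have yx : 0 < y - x by lra.
have zx : 0 < z - x by lra.
have zy : 0 < z - y by lra.
by split; rewrite ler_pdivrMr // mulrAC ler_pdivlMr //; lra.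
Qed.

Lemma slope_le p q g : chord_convex p q g ->
  forall u v u' v', p <= u -> u < v -> u' < v' -> v' <= q -> u <= u' -> v <= v' ->
  slope g u v <= slope g u' v'.
Proof.
move=> cvx u v u' v' pu uv uv' vq uu' vv'.
have uv'_le : slope g u v <= slope g u v'.
  have [<-|vv''] := eqVneq v v'; first exact: lexx.
  by case: (slope_le3 cvx pu uv (_ : v < v') vq) => //; rewrite lt_neqAle vv''.
apply: le_trans uv'_le _.
have [<-|uu''] := eqVneq u u'; first exact: lexx.
by case: (slope_le3 cvx pu (_ : u < u') uv' vq) => //; rewrite lt_neqAle uu''.
Qed.

Lemma sp_chordxx f c d : sp_chord f c d c = f c.
Proof. by rewrite /sp_chord subrr mulr0 addr0. Qed.

Lemma sp_chord_right f c d x : c != d ->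
  sp_chord f c d x = f d + slope f c d * (x - d).
Proof. by move=> cd; rewrite /sp_chord -/(slope f c d); have := slopeK f cd; lra. Qed.

Lemma sp_chord_subr f c d x : c != x ->
  sp_chord f c d x - f x = (slope f c d - slope f c x) * (x - c).
Proof. by move=> cx; rewrite mulrBl slopeK // /sp_chord /slope; lra. Qed.

Lemma le_sp_chord p q f c d x : chord_convex p q f ->
  p <= c -> c < d -> d <= q -> c <= x <= d -> f x <= sp_chord f c d x.
Proof.
move=> cvx pc cd dq /andP[cx xd].
have [<-|cx'] := eqVneq c x; first by rewrite sp_chordxx.
rewrite -subr_ge0 sp_chord_subr // mulr_ge0 ?subr_ge0 //.
by apply: (slope_le cvx) => //; rewrite lt_neqAle cx'.
Qed.

Lemma sp_chord_le_out p q f c d x : chord_convex p q f ->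
  p <= c -> c < d -> d <= q -> p <= x <= q -> (x <= c) || (d <= x) ->
  sp_chord f c d x <= f x.
Proof.
move=> cvx pc cd dq /andP[px xq] /orP[xc|dx].
- have [->|cx'] := eqVneq x c; first by rewrite sp_chordxx.
  have xc' : x < c by rewrite lt_neqAle cx' xc.
  rewrite -subr_le0 sp_chord_subr 1?eq_sym // (slopeC f c x).
  rewrite nmulr_lle0 ?subr_lt0 // subr_ge0.
  by apply: (slope_le cvx) => //; rewrite ltW.
- have cx : c < x by lra.
  rewrite -subr_le0 sp_chord_subr ?lt_eqF // pmulr_lle0 ?subr_gt0 // subr_le0.
  by apply: (slope_le cvx) => //; lra.
Qed.

Lemma sp_chord_norm_le f c d x M : c < d -> c <= x <= d ->
  `|f c| <= M -> `|f d| <= M -> `|sp_chord f c d x| <= M.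
Proof.
move=> cd /andP[cx xd] fcM fdM; have dc : 0 < d - c by lra.
have chordE : (d - c) * sp_chord f c d x = (d - x) * f c + (x - c) * f d.
  have -> : (d - c) * sp_chord f c d x = (d - c) * f c + slope f c d * (d - c) * (x - c).
    by rewrite /sp_chord /slope; ring.
  by rewrite slopeK ?lt_eqF //; ring.
rewrite -(ler_pM2l dc) -{1}(gtr0_norm dc) -normrM chordE.
apply: le_trans (ler_normD _ _) _.
rewrite !normrM !(@ger0_norm _ (_ - _)) ?subr_ge0 //.
have dx : 0 <= d - x by lra.
have xc : 0 <= x - c by lra.
by have := ler_wpM2l dx fcM; have := ler_wpM2l xc fdM; lra.
Qed.

Lemma chord_convex_support p q g y : chord_convex p q g -> p < y < q ->
  exists s, forall x, p <= x <= q -> g y + s * (x - y) <= g x.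
Proof.
move=> cvx /andP[py yq].
pose S := [set slope g x y | x in [set x | p <= x < y]].
have S_ub : ubound S (slope g y q).
  move=> _ [u /andP[pu uy] <-]; apply: (slope_le cvx) => //; lra.
have S_hub : has_ubound S by exists (slope g y q).
have S_n0 : S !=set0 by exists (slope g p y), p => //=; rewrite lexx py.
exists (sup S) => x /andP[px xq].
have [xy|yx|->] := ltgtP x y; last by rewrite subrr mulr0 addr0.
- have : slope g x y <= sup S by apply: ub_le_sup => //; exists x => //=; rewrite px xy.
  rewrite -(ler_nM2r (_ : x - y < 0)) ?subr_lt0 // (slopeC g x y) slopeK ?gt_eqF //.
  lra.
- have : sup S <= slope g y x.
    by apply: ge_sup => // _ [u /andP[pu uy] <-]; apply: (slope_le cvx) => //; lra.
  rewrite -(ler_pM2r (_ : 0 < x - y)) ?subr_gt0 // slopeK ?lt_eqF //.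
  lra.
Qed.

Lemma chord_convex_bounded p q g r : chord_convex p q g -> p < r -> r <= q ->
  exists M, forall x, r <= x <= q -> `|g x| <= M.
Proof.
move=> cvx pr rq.
exists (`|g r| + `|g q| + `|slope g p r| * (q - r)) => x /andP[rx xq].
have slope_bound : `|slope g p r| * (q - r) >= 0 by rewrite mulr_ge0 ?subr_ge0.
apply/ler_normlP; split.
- have lower : sp_chord g p r x <= g x.
    by apply: (sp_chord_le_out cvx) => //; rewrite ?lexx ?rx ?orbT //; lra.
  rewrite sp_chord_right ?lt_eqF // in lower.
  have : - (slope g p r * (x - r)) <= `|slope g p r| * (q - r).
    rewrite -mulrN; apply: le_trans (ler_norm _) _.
    by rewrite normrM ler_wpM2l // normrN ger0_norm; lra.
  have := normr_ge0 (g q); have := ler_norm (- g r); rewrite normrN; lra.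
- have [rqE|rq'] := eqVneq r q.
    have -> : x = q by rewrite rqE in rx; lra.
    by have := ler_norm (g q); have := normr_ge0 (g r); lra.
  have rq_lt : r < q by rewrite lt_neqAle rq' rq.
  have hx : r <= x <= q by rewrite rx xq.
  have upper : g x <= sp_chord g r q x by apply: (le_sp_chord cvx) => //; lra.
  have gr_le : `|g r| <= `|g r| + `|g q| by rewrite lerDl.
  have gq_le : `|g q| <= `|g r| + `|g q| by rewrite lerDr.
  have := sp_chord_norm_le rq_lt hx gr_le gq_le.
  by have := ler_norm (sp_chord g r q x); lra.
Qed.

Lemma chord_convex_lipschitz p q g y : chord_convex p q g -> p < y < q ->
  exists2 K, 0 <= K & forall x, p <= x <= q -> `|g x - g y| <= K * `|x - y|.
Proof.
move=> cvx pyq; have [s supp] := chord_convex_support cvx pyq.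
case/andP: pyq => py yq.
exists (`|s| + `|slope g p y| + `|slope g y q|) => [|x pxq]; first by rewrite !addr_ge0.
have /andP[px xq] := pxq.
have normM u w : u * w <= `|u| * `|w| by rewrite -normrM ler_norm.
have lower : - (`|s| * `|x - y|) <= g x - g y.
  by have := supp x pxq; have := normM (- s) (x - y); rewrite normrN; lra.
have upper : g x - g y <= (`|slope g p y| + `|slope g y q|) * `|x - y|.
  have [xy|yx] := leP x y.
  - have : g x <= sp_chord g p y x by apply: (le_sp_chord cvx) => //; lra.
    rewrite sp_chord_right ?lt_eqF //.
    have := normM (slope g p y) (x - y); have := normr_ge0 (x - y).
    have := normr_ge0 (slope g y q); nra.
  - have : g x <= sp_chord g y q x by apply: (le_sp_chord cvx) => //; lra.
    rewrite /sp_chord -/(slope g y q).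
    have := normM (slope g y q) (x - y); have := normr_ge0 (x - y).
    have := normr_ge0 (slope g p y); nra.
have := mulr_ge0 (normr_ge0 s) (normr_ge0 (x - y)).
have := mulr_ge0 (normr_ge0 (slope g p y)) (normr_ge0 (x - y)).
have := mulr_ge0 (normr_ge0 (slope g y q)) (normr_ge0 (x - y)).
by move=> *; apply/ler_normlP; split; lra.
Qed.

Lemma continuous_at_lipschitz g y r K : 0 < r -> 0 <= K ->
  (forall x, `|x - y| < r -> `|g x - g y| <= K * `|x - y|) -> {for y, continuous g}.
Proof.
move=> r0 K0 gK; apply/cvgrPdist_le => e e0; apply/nbhs_normP.
have eK : 0 < e / (K + 1) by rewrite divr_gt0 //; lra.
exists (Num.min r (e / (K + 1))); first by rewrite /= lt_min r0 eK.
move=> x /=; rewrite lt_min distrC => /andP[xr xe].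
rewrite distrC; apply: le_trans (gK x xr) _.
have : K * `|x - y| <= K * (e / (K + 1)) by rewrite ler_wpM2l // ltW.
suff : K * (e / (K + 1)) <= e by lra.
by rewrite mulrA ler_pdivrMr; lra.
Qed.

Lemma chord_convex_continuous p q g y : chord_convex p q g -> p < y < q ->
  {for y, continuous g}.
Proof.
move=> cvx pyq; have [K K0 gK] := chord_convex_lipschitz cvx pyq.
case/andP: pyq => py yq.
apply: (continuous_at_lipschitz (r := Num.min (y - p) (q - y))) K0 _.
  by rewrite lt_min !subr_gt0 py yq.
move=> x; rewrite lt_min => /andP[xp xq]; apply: gK.
by move: xp xq; rewrite !ltr_norml; lra.
Qed.

Lemma chord_convex_within_continuous p q a b g :
  chord_convex p q g -> p < a -> b < q -> {within `[a, b], continuous g}.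
Proof.
move=> cvx pa bq; apply: continuous_in_subspaceT => x.
by rewrite inE /= in_itv /= => /andP[ax xb]; apply: (chord_convex_continuous cvx); lra.
Qed.

Lemma chord_convex_glue p q r s phi psi : chord_convex p q phi -> chord_convex q r psi ->
  phi q = psi q ->
  (forall x, p <= x <= q -> phi q + s * (x - q) <= phi x) ->
  (forall z, q <= z <= r -> psi q + s * (z - q) <= psi z) ->
  chord_convex p r (fun x => if x <= q then phi x else psi x).
Proof.
move=> phi_cvx psi_cvx phi_psi phi_supp psi_supp x y z px xy yz zr /=.
have [zq|qz] := leP z q.
  rewrite (ltW (lt_le_trans yz zq)) (ltW (lt_trans xy (lt_le_trans yz zq))).
  exact: phi_cvx.
have [qx|xq] := leP q x.
  rewrite (_ : (y <= q) = false); last by apply/negbTE; rewrite -ltNge; lra.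
  have [xqE|xq'] := eqVneq x q.
    by rewrite xqE lexx phi_psi; apply: psi_cvx; lra.
  rewrite (_ : (x <= q) = false); last by apply/negbTE; rewrite -ltNge; lra.
  by apply: psi_cvx.
rewrite (ltW xq).
have hA : phi q + s * (x - q) <= phi x by apply: phi_supp; lra.
have hC : phi q + s * (z - q) <= psi z by rewrite phi_psi; apply: psi_supp; lra.
have cross : (z - x) * phi q <= (z - q) * phi x + (q - x) * psi z by nra.
have zx : 0 <= z - x by lra.
have yx : 0 <= y - x by lra.
have zy : 0 <= z - y by lra.
have [yq|qy] := leP y q.
- have left := ler_wpM2l zx (chord_convex_le phi_cvx px (ltW xy) yq (lexx q)).
  have right := ler_wpM2l yx cross.
  by rewrite -(ler_pM2l (_ : 0 < q - x)); lra.
- have right := ler_wpM2l zx (chord_convex_le psi_cvx (lexx q) (ltW qy) (ltW yz) zr).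
  have left := ler_wpM2l zy cross.
  by rewrite -phi_psi in right; rewrite -(ler_pM2l (_ : 0 < z - q)); lra.
Qed.

Lemma chord_convex_combination p q g x y t : chord_convex p q g ->
  p <= x -> x < y -> y <= q -> 0 < t < 1 ->
  g (t * x + (1 - t) * y) <= t * g x + (1 - t) * g y.
Proof.
move=> cvx px xy yq /andP[t0 t1]; have yx : 0 < y - x by lra.
have xw : x < t * x + (1 - t) * y.
  by rewrite -subr_gt0 (_ : _ - x = (1 - t) * (y - x)) ?mulr_gt0 ?subr_gt0 //; ring.
have wy : t * x + (1 - t) * y < y.
  by rewrite -subr_gt0 (_ : y - _ = t * (y - x)) ?mulr_gt0 //; ring.
have := cvx x (t * x + (1 - t) * y) y px xw wy yq.
have -> : y - (t * x + (1 - t) * y) = t * (y - x) by ring.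
have -> : t * x + (1 - t) * y - x = (1 - t) * (y - x) by ring.
by move=> le_w; rewrite -(ler_pM2l yx); lra.
Qed.

Lemma chord_convexP p q g : chord_convex p q g <-> sp_convex_on `[p, q] g.
Proof.
split=> [cvx x y t|cvx x y z px xy yz zq].
  rewrite /= !in_itv /= => /andP[px xq] /andP[py yq] /andP[t0 t1].
  have [->|t0'] := eqVneq t 0; first by rewrite !(mul0r, subr0, mul1r, add0r).
  have [->|t1'] := eqVneq t 1; first by rewrite !(mul1r, subrr, mul0r, addr0).
  have t01 : 0 < t < 1 by rewrite !lt_neqAle eq_sym t0' t1' t0 t1.
  have [xy|yx|->] := ltgtP x y; last by rewrite -!mulrDl subrKC !mul1r.
  - exact: chord_convex_combination cvx px xy yq t01.
  - have t01' : 0 < 1 - t < 1 by lra.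
    have := chord_convex_combination cvx py yx xq t01'.
    by rewrite (_ : 1 - (1 - t) = t) 1?addrC 1?(addrC (_ * g y)) //; ring.
have zx : 0 < z - x by lra.
set t := (z - y) / (z - x).
have ht : t * (z - x) = z - y by rewrite divfK ?lt0r_neq0.
have t01 : 0 <= t <= 1 by rewrite divr_ge0 ?ler_pdivrMr ?mul1r; lra.
clearbody t.
have yE : t * x + (1 - t) * z = y by lra.
have := cvx x z t; rewrite yE /= !in_itv /= => /(_ ltac:(lra) ltac:(lra) t01).
move=> /(ler_wpM2l (ltW zx)).
have htx : t * (z - x) * g x = (z - y) * g x by rewrite ht.
have htz : t * (z - x) * g z = (z - y) * g z by rewrite ht.
lra.
Qed.

Definition chord_patch f c d t b x : R :=
  if x <= d then sp_chord f c d x else if x <= t then f x else sp_chord f t b x.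

Lemma chord_patch_convex f c d t b p q : chord_convex c b f ->
  c < d -> d <= t -> t < b -> b <= q -> chord_convex p q (chord_patch f c d t b).
Proof.
move=> f_cvx cd dt tb bq.
have chord_d x : sp_chord f c d d + slope f c d * (x - d) = sp_chord f c d x.
  by rewrite !sp_chord_right ?lt_eqF //; lra.
apply: (@chord_convex_glue p d q (slope f c d) (sp_chord f c d)
  (fun x => if x <= t then f x else sp_chord f t b x)).
- exact: chord_convex_affine.
- apply: (@chord_convex_glue d t q (slope f t b) f (sp_chord f t b)).
  + by apply: chord_convexW f_cvx; rewrite ltW.
  + exact: (@chord_convex_affine t q (f t) (slope f t b) t).
  + by rewrite sp_chordxx.
  + move=> x /andP[dx xt]; apply: (sp_chord_le_out f_cvx); rewrite ?xt //; lra.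
  + by move=> z _; rewrite sp_chordxx.
- by rewrite dt sp_chord_right ?lt_eqF // subrr mulr0 addr0.
- by move=> x _; rewrite chord_d.
- move=> z /andP[dz zq]; rewrite dt -sp_chord_right ?lt_eqF //.
  have [zt|tz] := leP z t.
    by apply: (sp_chord_le_out f_cvx); rewrite ?dz ?orbT //; lra.
  have at_t : sp_chord f c d t <= f t.
    by apply: (sp_chord_le_out f_cvx); rewrite ?dt ?orbT //; lra.
  have slopes : slope f c d <= slope f t b by apply: (slope_le f_cvx); lra.
  have : slope f c d * (z - t) <= slope f t b * (z - t) by rewrite ler_pM2r ?subr_gt0.
  have -> : sp_chord f c d z = sp_chord f c d t + slope f c d * (z - t).
    by rewrite /sp_chord /slope; ring.
  have -> : sp_chord f t b z = f t + slope f t b * (z - t) by [].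
  lra.
Qed.

Lemma chord_patch_ge f c d t b x : chord_convex c b f ->
  c < d -> d <= t -> t < b -> c <= x <= b -> f x <= chord_patch f c d t b x.
Proof.
move=> f_cvx cd dt tb /andP[cx xb]; rewrite /chord_patch.
have [xd|dx] := leP x d; first by apply: (le_sp_chord f_cvx) => //; lra.
have [//|tx] := leP x t.
by apply: (le_sp_chord f_cvx) => //; lra.
Qed.

Lemma chord_patch_left f c d t b x : c < d -> x <= d ->
  (f x - f c) * (d - c) - (f d - f c) * (x - c) = (d - c) * (f x - chord_patch f c d t b x).
Proof. by move=> cd xd; rewrite /chord_patch xd /sp_chord; field; rewrite subr_eq0 gt_eqF. Qed.

Lemma chord_patch_mid f c d t b x :
  d < x <= t -> chord_patch f c d t b x = f x.
Proof. by move=> /andP[dx xt]; rewrite /chord_patch leNgt dx xt. Qed.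

Lemma chord_patch_right f c d t b x :
  d <= t -> t < x -> chord_patch f c d t b x = sp_chord f t b x.
Proof.
by move=> dt tx; rewrite /chord_patch !leNgt tx (le_lt_trans dt tx).
Qed.

Lemma chord_patch_tail f c d t b M x :
  chord_convex c b f -> c < d -> d <= t -> t < x < b ->
  (forall y, d <= y <= b -> `|f y| <= M) ->
  - (2 * M) <= f x - chord_patch f c d t b x <= 0.
Proof.
move=> f_cvx cd dt /andP[tx xb] f_bound; rewrite chord_patch_right //.
have f_le : f x <= sp_chord f t b x by apply: (le_sp_chord f_cvx) => //; lra.
have chord_M : `|sp_chord f t b x| <= M.
  by apply: sp_chord_norm_le; [lra | lra | apply: f_bound; lra | apply: f_bound; lra].
have fx_M : `|f x| <= M by apply: f_bound; lra.
have := ler_norm (- f x); have := ler_norm (sp_chord f t b x); rewrite normrN.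
by move=> *; apply/andP; split; lra.
Qed.

End ChordConvex.

Section SignedIntegral.
Variable R : realType.
Implicit Types (mu mup mun : {finite_measure set BorelR R -> \bar R}) (a b : R).

Lemma finite_measure_integrable_continuous mu a b (g : R -> R) :
  {within `[a, b], continuous g} -> mu.-integrable `[a, b] (EFin \o g).
Proof.
move=> g_cont; apply: measurable_bounded_integrable.
- exact: measurable_itv.
- by rewrite -ge0_fin_numE // fin_num_measure.
- exact: subspace_continuous_measurable_fun.
- have /compact_bounded[M [_ gM]] := continuous_compact g_cont (@segment_compact R a b).
  by exists M; split; rewrite ?num_real // => ? ? ? ?; exact: gM.
Qed.

Lemma Rintegral_affine mu a b (al s x0 : R) :
  Rintegral mu `[a, b] (fun x => al + s * (x - x0)) =
    al * fine (mu `[a, b]%classic) + s * (Rintegral mu `[a, b] id - x0 * fine (mu `[a, b]%classic)).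
Proof.
have cont_int h : continuous h -> mu.-integrable `[a, b] (EFin \o h).
  by move=> h_cont; apply/finite_measure_integrable_continuous/continuous_subspaceT.
have -> : (fun x => al + s * (x - x0)) = (fun x => cst (al - s * x0) x + s * id x).
  by apply/funext => x /=; ring.
rewrite RintegralD ?Rintegral_cst ?RintegralZl ?measurable_itv ?cont_int //=.
- by ring.
- by move=> x; exact: cvg_id.
- exact: cst_continuous.
- exact: mulrl_continuous.
Qed.

Lemma Rintegral_itv_split mu a (d t : R) b (k : R -> R) :
  a <= d -> d <= t -> t < b -> mu.-integrable `[a, b] (EFin \o k) ->
  (forall x, d < x <= t -> k x = 0) -> k b = 0 ->
  Rintegral mu `[a, b] k = Rintegral mu `[a, d] k + Rintegral mu `]t, b[ k.
Proof.
move=> ad dt tb k_int k_dt k_b.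
have mitv := @measurable_itv R.
have integralU (A B : set (BorelR R)) : measurable A -> measurable B ->
    (forall x, A x -> B x -> False) -> A `|` B `<=` `[a, b] ->
    Rintegral mu (A `|` B) k = Rintegral mu A k + Rintegral mu B k.
  move=> mA mB AB ABab; apply: Rintegral_setU => //.
    by apply: integrableS k_int => //; exact: measurableU.
  by apply/eqP; rewrite -subset0 => x [] /AB.
have vanish (D : set (BorelR R)) : measurable D -> {in D, k =1 cst 0} -> Rintegral mu D k = 0.
  by move=> mD k0; rewrite (eq_Rintegral _ k0) Rintegral_cst // mul0r.
have split_a : `[a, b]%classic = `[a, d] `|` `]d, b] by rewrite -itv_bndbnd_setU // bnd_simp; lra.
have split_t : `]d, b]%classic = `]d, t] `|` `]t, b] by rewrite -itv_bndbnd_setU // bnd_simp; lra.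
have split_b : `]t, b]%classic = `]t, b[ `|` `[b, b] by rewrite -itv_bndbnd_setU // bnd_simp; lra.
rewrite split_a integralU //; last 2 first.
- by move=> x /=; rewrite !in_itv /=; lra.
- by rewrite -split_a.
rewrite split_t integralU //; last 2 first.
- by move=> x /=; rewrite !in_itv /=; lra.
- by move=> x xdb; rewrite split_a; right; rewrite split_t.
rewrite split_b integralU //; last 2 first.
- by move=> x /=; rewrite !in_itv /=; lra.
- by move=> x xtb; rewrite split_a; right; rewrite split_t; right; rewrite split_b.
rewrite (vanish `]d, t]%classic) ?(vanish `[b, b]%classic) ?add0r ?addr0 //.
- by move=> x; rewrite inE /= in_itv /= => /andP[bx xb]; rewrite (_ : x = b) //; lra.
- by move=> x; rewrite inE /= in_itv /= => /k_dt.
Qed.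

Lemma finite_measure_itv_oo_small mu (d b e : R) : d < b -> 0 < e ->
  exists2 t, d <= t < b & fine (mu `]t, b[%classic) <= e.
Proof.
move=> db e0; have bd : 0 < b - d by lra.
pose F n : set (BorelR R) := `]b - (b - d) / n.+1%:R, b[%classic.
have F_meas n : measurable (F n) by exact: measurable_itv.
have F_cap : \bigcap_n F n = set0.
  rewrite -subset0 => x Fx.
  have xb : x < b by have := Fx 0%N I; rewrite /F /= in_itv /= => /andP[].
  have bx : 0 < (b - x) / (b - d) by rewrite divr_gt0 // subr_gt0.
  have [k hk] := ltr_add_invr bx.
  have := Fx k I; rewrite /F /= in_itv /= => /andP[Fkx _].
  move: hk; rewrite add0r ltr_pdivlMr // mulrC => hk.
  by move: Fkx; rewrite ltrBlDr -ltrBlDl => /lt_trans/(_ hk); rewrite ltxx.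
have F_decr : nonincreasing_seq F.
  move=> n m nm; apply/subsetPset => x; rewrite /F /= !in_itv /= => /andP[Fnx ->].
  rewrite andbT; apply: le_lt_trans Fnx; rewrite lerD2l lerN2.
  by rewrite ler_pdivrMr // mulrAC ler_pdivlMr // ler_pM2l // ler_nat ltnS.
have : (mu \o F) n @[n --> \oo] --> 0%E.
  rewrite -(measure0 mu) -F_cap; apply: nonincreasing_cvg_mu => //.
  - by rewrite -ge0_fin_numE //; apply: fin_num_measure.
  - by rewrite F_cap.
move/fine_cvgP => [_ /cvgrPdist_lt /(_ e e0) [N _ /(_ N (leqnn N))]].
rewrite /= sub0r normrN /F => muN.
exists (b - (b - d) / N.+1%:R).
  have r_gt0 : 0 < (b - d) / N.+1%:R by rewrite divr_gt0.
  have r_le : (b - d) / N.+1%:R <= b - d by rewrite ler_pdivrMr // ler_peMr ?ler1n // ltW.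
  by move: ((b - d) / N.+1%:R) r_gt0 r_le => r; lra.
exact: le_trans (ler_norm _) (ltW muN).
Qed.

Lemma sp_integrable_continuous mup mun a b (g : R -> R) :
  {within `[a, b], continuous g} -> sp_integrable mup mun `[a, b] g.
Proof. by move=> g_cont; split; apply: finite_measure_integrable_continuous. Qed.

Lemma sp_integrableB mup mun (D : set (BorelR R)) (g k : R -> R) : measurable D ->
  sp_integrable mup mun D g -> sp_integrable mup mun D k ->
  sp_integrable mup mun D (fun x => g x - k x).
Proof.
move=> mD [gp gn] [kp kn]; rewrite /sp_integrable.
have -> : EFin \o (fun x => g x - k x) = (fun x => (EFin \o g) x - (EFin \o k) x)%E.
  by apply/funext => x; rewrite /= EFinB.
by split; apply: integrableB.
Qed.

Lemma sp_integralB mup mun (D : set (BorelR R)) (g k : R -> R) : measurable D ->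
  sp_integrable mup mun D g -> sp_integrable mup mun D k ->
  sp_integral mup mun D (fun x => g x - k x) =
    sp_integral mup mun D g - sp_integral mup mun D k.
Proof. by move=> mD [gp gn] [kp kn]; rewrite /sp_integral !RintegralB //; ring. Qed.

Lemma sp_integral_affine mup mun a b (al s x0 : R) :
  sp_integral mup mun `[a, b] (fun x => al + s * (x - x0)) =
    al * sp_mass mup mun `[a, b]%classic +
    s * (sp_integral mup mun `[a, b] id - x0 * sp_mass mup mun `[a, b]%classic).
Proof. by rewrite /sp_integral /sp_mass !Rintegral_affine; ring. Qed.

Lemma sp_integral_itv_split mup mun a (d t : R) b (k : R -> R) :
  a <= d -> d <= t -> t < b -> sp_integrable mup mun `[a, b] k ->
  (forall x, d < x <= t -> k x = 0) -> k b = 0 ->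
  sp_integral mup mun `[a, b] k =
    sp_integral mup mun `[a, d] k + sp_integral mup mun `]t, b[ k.
Proof.
move=> ad dt tb [kp kn] k_dt k_b.
by rewrite /sp_integral !(Rintegral_itv_split ad dt tb) //; ring.
Qed.

Lemma sp_integral_nonpos_ge mup mun (D : set (BorelR R)) (k : R -> R) (K : R) : measurable D ->
  sp_integrable mup mun D k -> (forall x, D x -> - K <= k x <= 0) ->
  - K * fine (mup D) <= sp_integral mup mun D k.
Proof.
move=> mD [kp kn] k_bound; rewrite /sp_integral.
have lower : - K * fine (mup D) <= Rintegral mup D k.
  rewrite -Rintegral_cst //; apply: le_Rintegral => //.
    exact: finite_measure_integrable_cst.
  by move=> x /k_bound /andP[].
have upper : Rintegral mun D k <= 0.
  rewrite -(mul0r (fine (mun D))) -Rintegral_cst //; apply: le_Rintegral => //.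
    exact: finite_measure_integrable_cst.
  by move=> x /k_bound /andP[].
lra.
Qed.

End SignedIntegral.

Section SteffensenPopoviciu.
Variables (R : realType) (a b : R) (mup mun : {finite_measure set BorelR R -> \bar R}).
Hypothesis SP : SP_measure a b mup mun.

Local Notation mass := (sp_mass mup mun `[a, b]%classic).
Local Notation bary := (sp_barycenter a b mup mun).

Lemma sp_mass_gt0 : 0 < mass.
Proof. by case: SP. Qed.

Lemma sp_integral_id : sp_integral mup mun `[a, b]%classic id = bary * mass.
Proof. by rewrite /sp_barycenter divfK ?gt_eqF ?sp_mass_gt0. Qed.

Lemma sp_integral_ge0 p q g : chord_convex p q g -> p < a -> b < q ->
  (forall x, a <= x <= b -> 0 <= g x) -> 0 <= sp_integral mup mun `[a, b]%classic g.
Proof.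
move=> cvx pa bq g_ge0; case: SP => _ _; apply.
- exact: chord_convex_within_continuous cvx pa bq.
- by apply/chord_convexP; apply: chord_convexW cvx; rewrite ltW.
- by move=> x; rewrite /= in_itv /=; exact: g_ge0.
Qed.

Lemma sp_barycenter_itv : a <= bary <= b.
Proof.
have affine_ge0 s x0 : (forall x, a <= x <= b -> 0 <= s * (x - x0)) ->
    0 <= s * (bary - x0) * mass.
  move=> ge0; have pa : a - 1 < a by lra.
  have bq : b < b + 1 by lra.
  have := sp_integral_ge0 (@chord_convex_affine _ (a - 1) (b + 1) 0 s x0) pa bq.
  rewrite sp_integral_affine sp_integral_id mul0r add0r -mulrBl mulrA.
  by apply=> x /ge0; rewrite add0r.
have lo : 0 <= 1 * (bary - a) * mass by apply: affine_ge0 => x; lra.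
have hi : 0 <= -1 * (bary - b) * mass by apply: affine_ge0 => x; lra.
rewrite !(pmulr_lge0 _ sp_mass_gt0) in lo hi.
by apply/andP; split; lra.
Qed.

Lemma sp_jensen p q G : chord_convex p q G -> p < a -> b < q ->
  G bary * mass <= sp_integral mup mun `[a, b]%classic G.
Proof.
move=> cvx pa bq; have /andP[a_bary bary_b] := sp_barycenter_itv.
have [s supp] : exists s, forall x, p <= x <= q -> G bary + s * (x - bary) <= G x.
  by apply: chord_convex_support cvx _; lra.
have := sp_integral_ge0 (chord_convexB_affine (G bary) s bary cvx) pa bq.
rewrite sp_integralB ?sp_integral_affine ?sp_integral_id; last 3 first.
- exact: measurable_itv.
- exact/sp_integrable_continuous/(chord_convex_within_continuous cvx pa bq).
- apply/sp_integrable_continuous.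
  exact: chord_convex_within_continuous (@chord_convex_affine _ p q _ _ _) pa bq.
rewrite subrr mulr0 addr0 subr_ge0; apply=> x axb.
by rewrite subr_ge0; apply: supp; lra.
Qed.

End SteffensenPopoviciu.

Lemma sp_integral_chord_patch (R : realType) (mup mun : {finite_measure set BorelR R -> \bar R})
    (f : R -> R) (a b c d t M : R) :
  a < c -> c < d -> d <= t -> t < b -> chord_convex c b f ->
  sp_integrable mup mun `[a, b] f -> (forall x, d <= x <= b -> `|f x| <= M) ->
  0 <= sp_integral mup mun `[a, d]
         (fun x => (f x - f c) * (d - c) - (f d - f c) * (x - c)) ->
  sp_integral mup mun `[a, b] (chord_patch f c d t b) <=
    sp_integral mup mun `[a, b] f + 2 * M * fine (mup `]t, b[%classic).
Proof.
move=> ac cd dt tb f_cvx f_int f_bound defect_ge0.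
set G := chord_patch f c d t b.
have mitv := @measurable_itv R.
have G_int : sp_integrable mup mun `[a, b] G.
  apply/sp_integrable_continuous/(@chord_convex_within_continuous _ (a - 1) (b + 1)).
  - by apply: chord_patch_convex f_cvx cd dt tb _; lra.
  - lra.
  - lra.
have k_int := sp_integrableB (mitv _) f_int G_int.
suff : 0 <= sp_integral mup mun `[a, b] (fun x => f x - G x) + 2 * M * fine (mup `]t, b[%classic).
  by rewrite sp_integralB //; lra.
rewrite (sp_integral_itv_split _ dt tb k_int); last 3 first.
- lra.
- by move=> x xdt; rewrite /G chord_patch_mid // subrr.
- by rewrite /G chord_patch_right // sp_chord_right ?lt_eqF // !subrr mulr0 addr0 subrr.
have k_sub (D : set (BorelR R)) : measurable D -> D `<=` `[a, b] ->
    sp_integrable mup mun D (fun x => f x - G x).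
  by move=> mD Dab; case: k_int => kp kn; split; exact: integrableS Dab _.
have ad_sub : `[a, d] `<=` `[a, b] by apply: subset_itvl; rewrite bnd_simp; lra.
have [kp kn] := k_sub _ (mitv _) ad_sub.
have head_ge0 : 0 <= sp_integral mup mun `[a, d] (fun x => f x - G x).
  have defectE : sp_integral mup mun `[a, d]
      (fun x => (f x - f c) * (d - c) - (f d - f c) * (x - c)) =
      (d - c) * sp_integral mup mun `[a, d] (fun x => f x - G x).
    rewrite /sp_integral mulrBr -!RintegralZl //; congr (_ - _);
      by apply: eq_Rintegral => x; rewrite inE /= in_itv /= => /andP[_ xd]; exact: chord_patch_left.
  by move: defect_ge0; rewrite defectE pmulr_rge0 // subr_gt0.
have tail_ge : - (2 * M) * fine (mup `]t, b[%classic) <=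
    sp_integral mup mun `]t, b[ (fun x => f x - G x).
  apply: sp_integral_nonpos_ge => //; first by apply: k_sub => // x; rewrite /= !in_itv /=; lra.
  by move=> x; rewrite /= in_itv /= => txb; exact: chord_patch_tail f_cvx cd dt txb f_bound.
lra.
Qed.

Theorem theorem3 (R : realType) (a b : R)
    (mup mun : {finite_measure set BorelR R -> \bar R})
    (f : R -> R) (c d : R) :
  a < b ->
  SP_measure a b mup mun ->
  left_almost_convex_with a b mup mun f c d ->
  c <= sp_barycenter a b mup mun ->
  0 <= sp_integral mup mun `[a, d]%classic
         (fun x => (f x - f c) * (d - c) - (f d - f c) * (x - c)) ->
  f (sp_barycenter a b mup mun) <=
    sp_integral mup mun `[a, b]%classic f / sp_mass mup mun `[a, b]%classic.
Proof.
move=> _ SP [f_int [ac [cd db]] f_convex _] c_bary defect_ge0.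
have mass_gt0 := sp_mass_gt0 SP.
have /andP[_ bary_b] := sp_barycenter_itv SP.
have f_cvx : chord_convex c b f by apply/chord_convexP.
have [M f_bound] : exists M : R, forall x, d <= x <= b -> `|f x| <= M.
  exact: chord_convex_bounded f_cvx cd (ltW db).
have M_ge0 : 0 <= M.
  by apply: le_trans (normr_ge0 (f b)) (f_bound b _); rewrite lexx andbT ltW.
rewrite ler_pdivlMr //; apply/ler_addgt0Pr => e e_gt0.
have eM_gt0 : 0 < e / (2 * M + 1) by rewrite divr_gt0 //; lra.
have [t /andP[dt tb] tail_small] := finite_measure_itv_oo_small mup db eM_gt0.
have G_cvx : chord_convex (a - 1) (b + 1) (chord_patch f c d t b).
  by apply: chord_patch_convex f_cvx cd dt tb _; lra.
have a1 : a - 1 < a by lra.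
have b1 : b < b + 1 by lra.
have jensen := sp_jensen SP G_cvx a1 b1.
have f_le_G : f (sp_barycenter a b mup mun) <= chord_patch f c d t b (sp_barycenter a b mup mun).
  by apply: chord_patch_ge f_cvx cd dt tb _; rewrite c_bary bary_b.
have error := sp_integral_chord_patch ac cd dt tb f_cvx f_int f_bound defect_ge0.
have tail_err : 2 * M * fine (mup `]t, b[%classic) <= e.
  move: tail_small; rewrite ler_pdivlMr; last lra.
  have := fine_ge0 (measure_ge0 mup `]t, b[%classic); lra.
have := ler_wpM2r (ltW mass_gt0) f_le_G; lra.
Qed.
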